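(* Let $n\ge2$. The group $VSG_n$ has a presentation with generators $\{\mu_{i,i+1},\gamma_{i,i+1},v_i\mid 1\le i\le n-1\}$ (where $\mu_{i,i+1}=\sigma_iv_i$ and $\gamma_{i,i+1}=\tau_iv_i$) and defining relations: $v_i^2=1$; $v_iv_jv_i=v_jv_iv_j$ for $|i-j|=1$; $v_i\mu_{j,j+1}v_i=v_j\mu_{i,i+1}v_j$ for $|i-j|=1$; $v_i\gamma_{j,j+1}v_i=v_j\gamma_{i,i+1}v_j$ for $|i-j|=1$; $\mu_{j,j+1}(v_j\mu_{i,i+1}v_j)\mu_{i,i+1}=\mu_{i,i+1}(v_j\mu_{i,i+1}v_j)\mu_{j,j+1}$ for $|i-j|=1$; $\mu_{j,j+1}(v_j\mu_{i,i+1}v_j)\gamma_{i,i+1}=\gamma_{i,i+1}(v_j\mu_{i,i+1}v_j)\mu_{j,j+1}$ for $|i-j|=1$; $\mu_{i,i+1}v_i\gamma_{i,i+1}=\gamma_{i,i+1}v_i\mu_{i,i+1}$ for all $i$; $\alpha_i\beta_j=\beta_j\alpha_i$ for $|i-j|>1$, where $\alpha_i,\beta_i\in\{\mu_{i,i+1},\gamma_{i,i+1},v_i\}$.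
   Context: Let $n\ge 2$. The virtual singular braid group $VSG_n$ is the group generated by $\sigma_i,v_i,\tau_i$ ($1\le i\le n-1$) subject to: $v_i^2=1$; $\sigma_i\tau_i=\tau_i\sigma_i$; for $|i-j|=1$: $\sigma_i\sigma_j\sigma_i=\sigma_j\sigma_i\sigma_j$, $v_iv_jv_i=v_jv_iv_j$, $v_i\sigma_jv_i=v_j\sigma_iv_j$, $v_i\tau_jv_i=v_j\tau_iv_j$, $\sigma_i\sigma_j\tau_i=\tau_j\sigma_i\sigma_j$; and for $|i-j|>1$: $g_ih_j=h_jg_i$ for all $g_i,h_i\in\{\sigma_i,\tau_i,v_i\}$. The elementary fusing strings are $\mu_{i,i+1}:=\sigma_iv_i$, $\mu_{i,i+1}^{-1}=v_i\sigma_i^{-1}$, $\gamma_{i,i+1}:=\tau_iv_i$, $\bar\gamma_{i,i+1}:=v_i\tau_i^{-1}=\gamma_{i,i+1}^{-1}$. *)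

(* Groups given by presentations are modelled
   as words in the generators and their formal inverses, modulo the
   congruence generated by free cancellation and the defining relations. *)
From mathcomp Require Import all_boot.
Set Implicit Arguments. Unset Strict Implicit. Unset Printing Implicit Defensive.

(* A word: a list of letters (x, b); b = false is x, b = true is x^{-1}. *)
Definition word (X : Type) := seq (X * bool).

Definition winv (X : Type) (w : word X) : word X :=
  rev (map (fun p => (p.1, ~~ p.2)) w).

Inductive weq (X : Type) (R : word X -> word X -> Prop) : word X -> word X -> Prop :=
| weq_refl : forall w, weq R w w
| weq_sym : forall u w, weq R u w -> weq R w u
| weq_trans : forall u v w, weq R u v -> weq R v w -> weq R u w
| weq_cat : forall u u' v v', weq R u u' -> weq R v v' -> weq R (u ++ v) (u' ++ v')
| weq_cancel : forall x b, weq R [:: (x, b); (x, ~~ b)] [::]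
| weq_rel : forall l r, R l r -> weq R l r.

Definition adj (i j : nat) : bool := (i.+1 == j) || (j.+1 == i).
Definition far (i j : nat) : bool := (i.+1 < j) || (j.+1 < i).

(* index i : 'I_n.-1 stands for the generator index i+1 in 1..n-1 *)
Inductive vsg_kind := kSigma | kTau | kV.
Definition vsg_letter (n : nat) := (vsg_kind * 'I_n.-1)%type.

Definition sg {n} (i : 'I_n.-1) : vsg_letter n * bool := ((kSigma, i), false).
Definition tg {n} (i : 'I_n.-1) : vsg_letter n * bool := ((kTau, i), false).
Definition vg {n} (i : 'I_n.-1) : vsg_letter n * bool := ((kV, i), false).

Inductive vsg_rel (n : nat) : word (vsg_letter n) -> word (vsg_letter n) -> Prop :=
| vsg_vv : forall i : 'I_n.-1, vsg_rel [:: vg i; vg i] [::]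
| vsg_st : forall i : 'I_n.-1, vsg_rel [:: sg i; tg i] [:: tg i; sg i]
| vsg_sss : forall i j : 'I_n.-1, adj i j ->
    vsg_rel [:: sg i; sg j; sg i] [:: sg j; sg i; sg j]
| vsg_vvv : forall i j : 'I_n.-1, adj i j ->
    vsg_rel [:: vg i; vg j; vg i] [:: vg j; vg i; vg j]
| vsg_vsv : forall i j : 'I_n.-1, adj i j ->
    vsg_rel [:: vg i; sg j; vg i] [:: vg j; sg i; vg j]
| vsg_vtv : forall i j : 'I_n.-1, adj i j ->
    vsg_rel [:: vg i; tg j; vg i] [:: vg j; tg i; vg j]
| vsg_sst : forall i j : 'I_n.-1, adj i j ->
    vsg_rel [:: sg i; sg j; tg i] [:: tg j; sg i; sg j]
| vsg_far : forall (k k' : vsg_kind) (i j : 'I_n.-1), far i j ->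
    vsg_rel [:: ((k, i), false); ((k', j), false)] [:: ((k', j), false); ((k, i), false)].

Definition VSGeq (n : nat) := weq (@vsg_rel n).

Inductive fus_kind := kMu | kGam | kW.
Definition fus_letter (n : nat) := (fus_kind * 'I_n.-1)%type.

Definition mg {n} (i : 'I_n.-1) : fus_letter n * bool := ((kMu, i), false).
Definition gg {n} (i : 'I_n.-1) : fus_letter n * bool := ((kGam, i), false).
Definition wg {n} (i : 'I_n.-1) : fus_letter n * bool := ((kW, i), false).

Inductive fus_rel (n : nat) : word (fus_letter n) -> word (fus_letter n) -> Prop :=
| fus_vv : forall i : 'I_n.-1, fus_rel [:: wg i; wg i] [::]
| fus_vvv : forall i j : 'I_n.-1, adj i j ->
    fus_rel [:: wg i; wg j; wg i] [:: wg j; wg i; wg j]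
| fus_vmv : forall i j : 'I_n.-1, adj i j ->
    fus_rel [:: wg i; mg j; wg i] [:: wg j; mg i; wg j]
| fus_vgv : forall i j : 'I_n.-1, adj i j ->
    fus_rel [:: wg i; gg j; wg i] [:: wg j; gg i; wg j]
| fus_mmm : forall i j : 'I_n.-1, adj i j ->
    fus_rel [:: mg j; wg j; mg i; wg j; mg i] [:: mg i; wg j; mg i; wg j; mg j]
| fus_mmg : forall i j : 'I_n.-1, adj i j ->
    fus_rel [:: mg j; wg j; mg i; wg j; gg i] [:: gg i; wg j; mg i; wg j; mg j]
| fus_mvg : forall i : 'I_n.-1,
    fus_rel [:: mg i; wg i; gg i] [:: gg i; wg i; mg i]
| fus_far : forall (k k' : fus_kind) (i j : 'I_n.-1), far i j ->
    fus_rel [:: ((k, i), false); ((k', j), false)] [:: ((k', j), false); ((k, i), false)].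

Definition FUSeq (n : nat) := weq (@fus_rel n).

Definition fus_image {n} (x : fus_letter n) : word (vsg_letter n) :=
  match x.1 with
  | kMu => [:: sg x.2; vg x.2]
  | kGam => [:: tg x.2; vg x.2]
  | kW => [:: vg x.2]
  end.

Definition phi {n} (w : word (fus_letter n)) : word (vsg_letter n) :=
  flatten (map (fun p => if p.2 then winv (fus_image p.1) else fus_image p.1) w).

(* Every letter map f : X -> word Y extends to a
   substitution [ext f] on words.  If [ext f] carries defining relations to
   consequences of defining relations, it induces a homomorphism.  We exhibit
   the inverse substitution psi (sigma |-> mu v, tau |-> gamma v, v |-> v);
   since v_i^2 = 1 both composites send every generator to a word equal to
   it, and a general lemma [presentation_iso] turns these four facts into
   "well defined, injective, surjective". *)
From mathcomp Require Import all_boot.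
From Stdlib Require List.
Set Implicit Arguments. Unset Strict Implicit. Unset Printing Implicit Defensive.

Section WordCalculus.
Variables (X : Type) (R : word X -> word X -> Prop).
Local Notation "u ~ w" := (weq R u w) (at level 70).
Implicit Types u v w : word X.

Lemma weq_catl (a : word X) u w : u ~ w -> a ++ u ~ a ++ w.
Proof. exact: weq_cat (weq_refl _ _). Qed.

Lemma weq_catr (a : word X) u w : u ~ w -> u ++ a ~ w ++ a.
Proof. by move/weq_cat; apply; apply: weq_refl. Qed.

Lemma weq_at k (l r w w' : word X) : l ~ r -> take (size l) (drop k w) = l ->
  take k w ++ r ++ drop (k + size l) w ~ w' -> w ~ w'.
Proof.
move=> lr Ew; apply: weq_trans.
rewrite -{1}(cat_take_drop k w) -{1}(cat_take_drop (size l) (drop k w)) Ew.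
by rewrite addnC -drop_drop; apply/weq_catl/weq_catr.
Qed.

Lemma winv_cat u w : winv (u ++ w) = winv w ++ winv u.
Proof. by rewrite /winv map_cat rev_cat. Qed.

Lemma winvK w : winv (winv w) = w.
Proof.
rewrite /winv map_rev revK -map_comp -[RHS]map_id.
by apply: eq_map => -[x b] /=; rewrite negbK.
Qed.

Lemma cat_winv w : w ++ winv w ~ [::].
Proof.
elim: w => [|[x b] w IH]; first exact: weq_refl.
rewrite /winv /= rev_cons -cats1 -/(winv w).
have -> : (x, b) :: w ++ winv w ++ [:: (x, ~~ b)] =
          [:: (x, b)] ++ (w ++ winv w) ++ [:: (x, ~~ b)] by rewrite /= catA.
apply: weq_trans (weq_cancel _ x b).
rewrite -[[:: (x, b); (x, ~~ b)]]/([:: (x, b)] ++ [::] ++ [:: (x, ~~ b)]).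
by apply/weq_catl/weq_catr.
Qed.

Lemma winv_cat_self w : winv w ++ w ~ [::].
Proof. by have := cat_winv (winv w); rewrite winvK. Qed.

Lemma weq_winv u w : u ~ w -> winv u ~ winv w.
Proof.
elim=> {u w} [w|u w _ H|u v w _ H1 _ H2|u u' v v' _ H1 _ H2|x b|l r lr].
- exact: weq_refl.
- exact: weq_sym.
- exact: weq_trans H2.
- by rewrite !winv_cat; apply: weq_cat.
- by rewrite /winv /= negbK; apply: weq_cancel.
- apply: (@weq_trans _ _ _ (winv l ++ r ++ winv r)).
    by rewrite -[X in X ~ _]cats0; apply/weq_catl/weq_sym/cat_winv.
  apply: (@weq_trans _ _ _ (winv l ++ l ++ winv r)).
    by apply/weq_catl/weq_catr/weq_sym/weq_rel.
  by rewrite catA -[X in _ ~ X]cat0s; apply/weq_catr/winv_cat_self.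
Qed.

Lemma weq_cancel_r x u w : u ++ x ~ w ++ x -> u ~ w.
Proof.
move=> H; apply: (@weq_trans _ _ _ ((u ++ x) ++ winv x)).
  by rewrite -catA -[X in X ~ _]cats0; apply/weq_catl/weq_sym/cat_winv.
apply: (@weq_trans _ _ _ ((w ++ x) ++ winv x)); first exact: weq_catr.
by rewrite -catA -[X in _ ~ X]cats0; apply/weq_catl/cat_winv.
Qed.

Lemma weq_comm_letter a w :
  (forall b, List.In b w -> [:: a; b] ~ [:: b; a]) -> a :: w ~ w ++ [:: a].
Proof.
elim: w => [|b w IH] ab /=; first exact: weq_refl.
apply: (@weq_trans _ _ _ (b :: a :: w)).
  by apply: (weq_catr _ (ab b _)); left.
by apply: (weq_catl [:: b] (IH _)) => c Hc; apply: ab; right.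
Qed.

Lemma weq_comm_words u w :
  (forall a, List.In a u -> forall b, List.In b w -> [:: a; b] ~ [:: b; a]) ->
  u ++ w ~ w ++ u.
Proof.
elim: u => [|a u IH] H /=; first by rewrite cats0; apply: weq_refl.
apply: (@weq_trans _ _ _ (a :: w ++ u)).
  by apply: (weq_catl [:: a] (IH _)) => c Hc; apply: H; right.
rewrite -cat1s catA -[w ++ a :: u]/(w ++ [:: a] ++ u) catA.
by apply: weq_catr; apply: weq_comm_letter => b Hb; apply: H => //; left.
Qed.

End WordCalculus.

Ltac rw_at k H := apply: (@weq_at _ _ k _ _ _ _ H); [reflexivity | rewrite /=].
Ltac rel k H := rw_at k (weq_rel H).
Ltac rel' k H := rw_at k (weq_sym (weq_rel H)).

Definition ext (X Y : Type) (f : X -> word Y) (w : word X) : word Y :=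
  flatten (map (fun p => if p.2 then winv (f p.1) else f p.1) w).

Definition respects (X Y : Type) (f : X -> word Y)
  (R : word X -> word X -> Prop) (S : word Y -> word Y -> Prop) : Prop :=
  forall l r, R l r -> weq S (ext f l) (ext f r).

Section Substitution.
Variables (X Y : Type) (f : X -> word Y).

Lemma ext_cat u w : ext f (u ++ w) = ext f u ++ ext f w.
Proof. by rewrite /ext map_cat flatten_cat. Qed.

Lemma ext_cons x b w :
  ext f ((x, b) :: w) = (if b then winv (f x) else f x) ++ ext f w.
Proof. by []. Qed.

Lemma ext_winv w : ext f (winv w) = winv (ext f w).
Proof.
elim: w => [|[x b] w IH] //.
have -> : winv ((x, b) :: w) = winv w ++ [:: (x, ~~ b)].
  by rewrite /winv /= rev_cons cats1.
rewrite ext_cat IH !ext_cons winv_cat /= cats0.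
by case: b; rewrite ?winvK.
Qed.

Lemma ext_hom R S : respects f R S ->
  forall u w, weq R u w -> weq S (ext f u) (ext f w).
Proof.
move=> fRS u w.
elim=> {u w} [w|u w _ H|u v w _ H1 _ H2|u u' v v' _ H1 _ H2|x b|].
- exact: weq_refl.
- exact: weq_sym.
- exact: weq_trans H2.
- by rewrite !ext_cat; apply: weq_cat.
- by rewrite !ext_cons cats0; case: b; [apply: winv_cat_self|apply: cat_winv].
- exact: fRS.
Qed.

End Substitution.

Lemma ext_comp (X Y Z : Type) (f : X -> word Y) (g : Y -> word Z) w :
  ext g (ext f w) = ext (fun x => ext g (f x)) w.
Proof.
elim: w => [|[x b] w IH] //.
rewrite !ext_cons ext_cat IH.
by case: b; rewrite ?ext_winv.
Qed.

Lemma ext_weq_id (X : Type) (S : word X -> word X -> Prop) (h : X -> word X) :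
  (forall x, weq S [:: (x, false)] (h x)) -> forall w, weq S w (ext h w).
Proof.
move=> hx; elim=> [|[x b] w IH]; first exact: weq_refl.
rewrite ext_cons -cat1s; apply: weq_cat IH.
case: b; last exact: hx.
by apply: (weq_winv (u := [:: (x, false)])).
Qed.

Lemma presentation_iso (X Y : Type) (R : word X -> word X -> Prop)
    (S : word Y -> word Y -> Prop) (f : X -> word Y) (g : Y -> word X) :
  respects f R S -> respects g S R ->
  (forall x, weq R [:: (x, false)] (ext g (f x))) ->
  (forall y, weq S [:: (y, false)] (ext f (g y))) ->
  [/\ forall u w, weq R u w -> weq S (ext f u) (ext f w),
      forall u w, weq S (ext f u) (ext f w) -> weq R u w &
      forall w, exists u, weq S w (ext f u)].
Proof.
move=> fRS gSR gf fg; split; first exact: ext_hom.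
- move=> u w /(ext_hom gSR); rewrite !ext_comp => Hgf.
  apply: weq_trans (ext_weq_id gf u) _; apply: weq_trans Hgf _.
  exact/weq_sym/ext_weq_id.
- by move=> w; exists (ext g w); rewrite ext_comp; apply: ext_weq_id.
Qed.

Lemma adjC i j : adj i j -> adj j i.
Proof. by rewrite /adj orbC. Qed.

Definition psi {n} (x : vsg_letter n) : word (fus_letter n) :=
  match x.1 with
  | kSigma => [:: mg x.2; wg x.2]
  | kTau => [:: gg x.2; wg x.2]
  | kV => [:: wg x.2]
  end.

(* All letters of the image of a generator of index i carry the index i;
   this makes far commutation relations map to far commutations. *)
Lemma fus_image_index n (k : fus_kind) (i : 'I_n.-1) a :
  List.In a (fus_image (k, i)) -> exists k0, a = ((k0, i), false).
Proof. by case: k => /= [[<-|[<-|[]]]|[<-|[<-|[]]]|[<-|[]]]; eexists. Qed.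

Lemma psi_index n (k : vsg_kind) (i : 'I_n.-1) a :
  List.In a (psi (k, i)) -> exists k0, a = ((k0, i), false).
Proof. by case: k => /= [[<-|[<-|[]]]|[<-|[<-|[]]]|[<-|[]]]; eexists. Qed.

Section PhiHom.
Variable n : nat.
Implicit Types i j : 'I_n.-1.
Local Notation "u ~ w" := (weq (@vsg_rel n) u w) (at level 70).

Lemma phi_vmv i j : adj i j ->
  [:: vg i; sg j; vg j; vg i] ~ [:: vg j; sg i; vg i; vg j].
Proof.
move=> h. rel' 2 (vsg_vv i). rel 0 (vsg_vsv h). rel 3 (vsg_vvv h).
rel 2 (vsg_vv j). exact: weq_refl.
Qed.

Lemma phi_vgv i j : adj i j ->
  [:: vg i; tg j; vg j; vg i] ~ [:: vg j; tg i; vg i; vg j].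
Proof.
move=> h. rel' 2 (vsg_vv i). rel 0 (vsg_vtv h). rel 3 (vsg_vvv h).
rel 2 (vsg_vv j). exact: weq_refl.
Qed.

(* Image of the mixed braid relation for mu: both sides equal
   sigma_j sigma_i sigma_j v_i v_j v_i. *)
Lemma phi_mmm i j : adj i j ->
  [:: sg j; vg j; vg j; sg i; vg i; vg j; sg i; vg i] ~
  [:: sg i; vg i; vg j; sg i; vg i; vg j; sg j; vg j].
Proof.
move=> h; have h' := adjC h.
apply: (@weq_trans _ _ _ [:: sg j; sg i; sg j; vg i; vg j; vg i]).
  rel 1 (vsg_vv j). rel' 5 (vsg_vv j). rel 3 (vsg_vsv h'). rel 2 (vsg_vv i).
  exact: weq_refl.
apply: weq_sym.
rel' 4 (vsg_vv j). rel 2 (vsg_vsv h'). rel 1 (vsg_vv i). rel 2 (vsg_vvv h).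
rel 4 (vsg_vv j). rel' 5 (vsg_vv i). rel 3 (vsg_vsv h). rel 2 (vsg_vv j).
rel 0 (vsg_sss h). rel 3 (vsg_vvv h'). exact: weq_refl.
Qed.

Lemma phi_mmg i j : adj i j ->
  [:: sg j; vg j; vg j; sg i; vg i; vg j; tg i; vg i] ~
  [:: tg i; vg i; vg j; sg i; vg i; vg j; sg j; vg j].
Proof.
move=> h; have h' := adjC h.
apply: (@weq_trans _ _ _ [:: sg j; sg i; tg j; vg i; vg j; vg i]).
  rel 1 (vsg_vv j). rel' 5 (vsg_vv j). rel 3 (vsg_vtv h'). rel 2 (vsg_vv i).
  exact: weq_refl.
apply: weq_sym.
rel' 4 (vsg_vv j). rel 2 (vsg_vsv h'). rel 1 (vsg_vv i). rel 2 (vsg_vvv h).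
rel 4 (vsg_vv j). rel' 5 (vsg_vv i). rel 3 (vsg_vsv h). rel 2 (vsg_vv j).
rel' 0 (vsg_sst h'). rel 3 (vsg_vvv h'). exact: weq_refl.
Qed.

(* Image of mu_i v_i gamma_i = gamma_i v_i mu_i: it is sigma_i tau_i = tau_i sigma_i. *)
Lemma phi_mvg i :
  [:: sg i; vg i; vg i; tg i; vg i] ~ [:: tg i; vg i; vg i; sg i; vg i].
Proof. rel 1 (vsg_vv i). rel 0 (vsg_st i). rel' 1 (vsg_vv i). exact: weq_refl. Qed.

Lemma fus_image_respects : respects (@fus_image n) (@fus_rel n) (@vsg_rel n).
Proof.
move=> l r; case=> [i|i j h|i j h|i j h|i j h|i j h|i|k k' i j h]; rewrite /ext /=.
- exact: weq_rel (vsg_vv i).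
- exact: weq_rel (vsg_vvv h).
- exact: phi_vmv.
- exact: phi_vgv.
- exact: phi_mmm.
- exact: phi_mmg.
- exact: phi_mvg.
- rewrite !cats0; apply: weq_comm_words => a Ha b Hb.
  have [k0 ->] := fus_image_index Ha; have [k1 ->] := fus_image_index Hb.
  exact: weq_rel (vsg_far _ _ h).
Qed.

(* phi (psi x) equals x in VSG_n, because v_i^2 = 1. *)
Lemma fus_image_psi (x : vsg_letter n) :
  [:: (x, false)] ~ ext (@fus_image n) (psi x).
Proof.
case: x => -[] i; rewrite /ext /=; last exact: weq_refl.
all: rel' 1 (vsg_vv i); exact: weq_refl.
Qed.

End PhiHom.

Section PsiHom.
Variable n : nat.
Implicit Types i j : 'I_n.-1.
Local Notation "u ~ w" := (weq (@fus_rel n) u w) (at level 70).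

Lemma psi_vsv i j : adj i j ->
  [:: wg i; mg j; wg j; wg i] ~ [:: wg j; mg i; wg i; wg j].
Proof.
move=> h. rel' 2 (fus_vv i). rel 0 (fus_vmv h). rel 3 (fus_vvv h).
rel 2 (fus_vv j). exact: weq_refl.
Qed.

Lemma psi_vtv i j : adj i j ->
  [:: wg i; gg j; wg j; wg i] ~ [:: wg j; gg i; wg i; wg j].
Proof.
move=> h. rel' 2 (fus_vv i). rel 0 (fus_vgv h). rel 3 (fus_vvv h).
rel 2 (fus_vv j). exact: weq_refl.
Qed.

Lemma psi_st i : [:: mg i; wg i; gg i; wg i] ~ [:: gg i; wg i; mg i; wg i].
Proof. rel 0 (fus_mvg i). exact: weq_refl. Qed.

(* Image of the braid relation: after cancelling v_j v_i v_j on the right,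
   both sides reduce to the mixed relation for mu. *)
Lemma psi_sss i j : adj i j ->
  [:: mg i; wg i; mg j; wg j; mg i; wg i] ~
  [:: mg j; wg j; mg i; wg i; mg j; wg j].
Proof.
move=> h; have h' := adjC h.
apply: (@weq_cancel_r _ _ [:: wg j; wg i; wg j]) => /=.
apply: (@weq_trans _ _ _ [:: mg j; wg i; mg j; wg i; mg i]).
  rel 5 (fus_vvv h). rel 7 (fus_vv j). rel' 4 (fus_vv j). rel 5 (fus_vmv h').
  rel 7 (fus_vv i). rel 3 (fus_vv j). rel 0 (fus_mmm h'). exact: weq_refl.
apply: weq_sym.
rel 5 (fus_vv j). rel' 4 (fus_vv i). rel 5 (fus_vmv h). rel 7 (fus_vv j).
rel 3 (fus_vv i). rel 1 (fus_vmv h'). exact: weq_refl.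
Qed.

(* Image of sigma_i sigma_j tau_i = tau_j sigma_i sigma_j, by the same route. *)
Lemma psi_sst i j : adj i j ->
  [:: mg i; wg i; mg j; wg j; gg i; wg i] ~
  [:: gg j; wg j; mg i; wg i; mg j; wg j].
Proof.
move=> h; have h' := adjC h.
apply: (@weq_cancel_r _ _ [:: wg j; wg i; wg j]) => /=.
apply: (@weq_trans _ _ _ [:: gg j; wg i; mg j; wg i; mg i]).
  rel 5 (fus_vvv h). rel 7 (fus_vv j). rel' 4 (fus_vv j). rel 5 (fus_vgv h').
  rel 7 (fus_vv i). rel 3 (fus_vv j). rel 0 (fus_mmg h'). exact: weq_refl.
apply: weq_sym.
rel 5 (fus_vv j). rel' 4 (fus_vv i). rel 5 (fus_vmv h). rel 7 (fus_vv j).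
rel 3 (fus_vv i). rel 1 (fus_vmv h'). exact: weq_refl.
Qed.

Lemma psi_respects : respects (@psi n) (@vsg_rel n) (@fus_rel n).
Proof.
move=> l r; case=> [i|i|i j h|i j h|i j h|i j h|i j h|k k' i j h]; rewrite /ext /=.
- exact: weq_rel (fus_vv i).
- exact: psi_st.
- exact: psi_sss.
- exact: weq_rel (fus_vvv h).
- exact: psi_vsv.
- exact: psi_vtv.
- exact: psi_sst.
- rewrite !cats0; apply: weq_comm_words => a Ha b Hb.
  have [k0 ->] := psi_index Ha; have [k1 ->] := psi_index Hb.
  exact: weq_rel (fus_far _ _ h).
Qed.

(* psi (phi x) equals x in the fusing presentation, because v_i^2 = 1. *)
Lemma psi_fus_image (x : fus_letter n) :
  [:: (x, false)] ~ ext (@psi n) (fus_image x).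
Proof.
case: x => -[] i; rewrite /ext /=; last exact: weq_refl.
all: rel' 1 (fus_vv i); exact: weq_refl.
Qed.

End PsiHom.

Theorem mainTheorem2 (n : nat) (hn : 2 <= n) :
  (forall u w : word (fus_letter n), FUSeq u w -> VSGeq (phi u) (phi w)) /\
  (forall u w : word (fus_letter n), VSGeq (phi u) (phi w) -> FUSeq u w) /\
  (forall w : word (vsg_letter n), exists u : word (fus_letter n), VSGeq w (phi u)).
Proof.
have [hom inj surj] := presentation_iso (@fus_image_respects n) (@psi_respects n)
  (@psi_fus_image n) (@fus_image_psi n).
by split; [|split].
Qed.
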